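(* Let $\vec\Sigma$ be a finite sequence of finite connected tight labeled core graphs over $\mathcal B$ and let $\alpha$ be an elementary Whitehead automorphism with distinguished label $b$. Let $e$ be an edge of $\vec\Sigma$ with label $c\notin\{b,b^{-1}\}$ and let $e'$ be the image in $\mathrm{tight}(\alpha\vec\Sigma)$ of the unique subedge of $\alpha(e)$ labeled $c$. Then $e'$ lies in $\alpha_\#\vec\Sigma=\mathrm{core}(\mathrm{tight}(\alpha\vec\Sigma))$. Consequently $e\mapsto e'$ is a bijection between the edges of $\vec\Sigma$ not labeled $b^{\pm1}$ and the edges of $\alpha_\#\vec\Sigma$ not labeled $b^{\pm1}$.
   Context: $F(\mathcal B)$ is the free group on the finite set $\mathcal B$. A labeled graph assigns labels in $\mathcal B^{\pm1}$ to oriented edges, $e^{-1}$ carrying the inverse label; it is tight if distinct oriented edges with the same initial vertex have distinct labels. The core of a graph is the union of all edges crossed by immersed loops (cyclically reduced closed edge paths); a core graph equals its core. $\mathrm{tight}(\Sigma)$ is the result of iteratively folding (identifying two distinct oriented edges with common initial vertex and equal labels) until tight, with quotient map $\Sigma\to\mathrm{tight}(\Sigma)$. For $\alpha\in\mathrm{Aut}(F(\mathcal B))$, $\alpha\Sigma$ replaces each oriented edge labeled $c$ by a path spelling the reduced word $\alpha(c)$. Operations on sequences are componentwise. An elementary Whitehead automorphism is either induced by a permutation $\pi$ of $\mathcal B^{\pm1}$ with $\pi(c^{-1})=\pi(c)^{-1}$, or is determined by $b\in\mathcal B^{\pm1}$ (the distinguished label) and $A\subset\mathcal B^{\pm1}\setminus\{b^{\pm1}\}$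 via $\alpha(b)=b$, $\alpha(c)=b^{\epsilon(c)}\,c\,b^{-\epsilon(c^{-1})}$ for $c\neq b^{\pm1}$, where $\epsilon(x)=1$ if $x\in A$ and $0$ otherwise. *)

From Stdlib Require Import Relations.
From HB Require Import structures.
From mathcomp Require Import all_boot.
Set Implicit Arguments. Unset Strict Implicit. Unset Printing Implicit Defensive.

(* Labels in B^{+-1}: (x, true) is x, (x, false) is x^{-1}. *)
Definition label (B : finType) := (B * bool)%type.
Definition flip (B : finType) (c : label B) : label B := (c.1, ~~ c.2).
Lemma flipK (B : finType) : involutive (@flip B).
Proof. by case=> x s; rewrite /flip /= negbK. Qed.

Record graph (B : finType) := Graph {
  V : finType;
  E : finType;
  src : E -> V;
  inv : E -> E;
  lab : E -> label B;
  invK : involutive inv;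
  inv_neq : forall e, inv e != e;
  lab_inv : forall e, lab (inv e) = flip (lab e) }.

Arguments src {B} g _ : rename.
Arguments inv {B} g _ : rename.
Arguments lab {B} g _ : rename.
Arguments V {B} g : rename.
Arguments E {B} g : rename.
Definition tgt (B : finType) (G : graph B) (e : E G) : V G := src G (inv G e).
Arguments tgt {B} G e.

(* A quotient of G (obtained by folding) is recorded by equivalence relations
   on the vertices and oriented edges of G. *)
Record fstate (B : finType) (G : graph B) := FState {
  VR : V G -> V G -> Prop;
  ER : E G -> E G -> Prop }.

Definition init_state (B : finType) (G : graph B) : fstate G :=
  FState (@eq (V G)) (@eq (E G)).

Definition merge (T : Type) (R : T -> T -> Prop) (a b : T) : T -> T -> Prop :=
  fun x y => R x y \/ (R x a /\ R b y) \/ (R x b /\ R a y).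

Definition fold_at (B : finType) (G : graph B) (S : fstate G) (e1 e2 : E G) :
  fstate G :=
  FState (merge (VR S) (tgt G e1) (tgt G e2))
         (merge (merge (ER S) e1 e2) (inv G e1) (inv G e2)).

Inductive fold_step (B : finType) (G : graph B) : fstate G -> fstate G -> Prop :=
| FoldStep (S : fstate G) (e1 e2 : E G) :
    VR S (src G e1) (src G e2) -> lab G e1 = lab G e2 -> ~ ER S e1 e2 ->
    fold_step S (fold_at S e1 e2).

Definition is_tight_state (B : finType) (G : graph B) (S : fstate G) : Prop :=
  forall e1 e2 : E G, VR S (src G e1) (src G e2) -> lab G e1 = lab G e2 ->
    ER S e1 e2.

(* S describes tight(G): it is reached by iterated folding from G and is tight;
   the quotient map G -> tight(G) sends an edge e to its ER S-class. *)
Definition folds_to (B : finType) (G : graph B) (S : fstate G) : Prop :=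
  clos_refl_trans _ (@fold_step B G) (init_state G) S /\ is_tight_state S.

(* Immersed loop in the quotient graph described by S, of length n > 0,
   given by representatives g 0, ..., g (n-1) (indices mod n). *)
Definition imm_loop (B : finType) (G : graph B) (S : fstate G) (n : nat)
    (g : nat -> E G) : Prop :=
  0 < n /\ forall i, i < n ->
    VR S (tgt G (g i)) (src G (g (i.+1 %% n))) /\
    ~ ER S (g (i.+1 %% n)) (inv G (g i)).

Definition in_core (B : finType) (G : graph B) (S : fstate G) (f : E G) : Prop :=
  exists n g, imm_loop S n g /\
    exists2 i, i < n & (ER S (g i) f \/ ER S (g i) (inv G f)).

Definition is_tight (B : finType) (G : graph B) : Prop :=
  is_tight_state (init_state G).

Definition is_core (B : finType) (G : graph B) : Prop :=
  (forall f : E G, in_core (init_state G) f) /\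
  (forall v : V G, exists e : E G, src G e = v).

Section Alpha.
Variables (B : finType) (G : graph B) (b : label B) (A : {set label B}).

Definition isb (c : label B) := (c == b) || (c == flip b).
Lemma isb_flip c : isb (flip c) = isb c.
Proof.
rewrite /isb; case: c => x s; case: b => y t; rewrite /flip /= !xpair_eqE.
by case: s; case: t; case: (x == y).
Qed.

(* epsilon(c) = (c \in A);  alpha(c) = b^{eps c} c b^{- eps c^{-1}} *)
Definition midok (e : E G) := ~~ isb (lab G e).
Definition preok (e : E G) := midok e && (lab G e \in A). (* alpha(lab e) starts with b *)
Definition keepok (e : E G) := isb (lab G e).

Lemma midok_inv e : midok e -> midok (inv G e).
Proof. by rewrite /midok lab_inv isb_flip. Qed.
Lemma keepok_inv e : keepok e -> keepok (inv G e).
Proof. by rewrite /keepok lab_inv isb_flip. Qed.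

(* vertices: old vertices, and one new vertex for each oriented edge e whose
   image path alpha(e) starts with b (the vertex after that b) *)
Definition aV : finType := (V G + {e : E G | preok e})%type.
(* edges: Mid e (the subedge of alpha(e) labeled lab e), Pre e (the initial
   b-edge of alpha(e)), PreI e = (Pre e)^{-1}, and Keep e for edges labeled b^{+-1} *)
Definition aE : finType :=
  ({e : E G | midok e} + {e : E G | preok e} + {e : E G | preok e}
   + {e : E G | keepok e})%type.

Definition Mid (e : E G) (h : midok e) : aE := inl (inl (inl (exist _ e h))).

Definition newv (e : E G) : aV :=
  match (insub e : option {x : E G | preok x}) with
  | Some x => inr x
  | None => inl (src G e)
  end.

Definition asrc (f : aE) : aV :=
  match f with
  | inl (inl (inl x)) => newv (val x)
  | inl (inl (inr x)) => inl (src G (val x))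
  | inl (inr x) => newv (val x)
  | inr x => inl (src G (val x))
  end.

Definition ainv (f : aE) : aE :=
  match f with
  | inl (inl (inl x)) => inl (inl (inl (exist _ (inv G (val x)) (midok_inv (valP x)))))
  | inl (inl (inr x)) => inl (inr x)
  | inl (inr x) => inl (inl (inr x))
  | inr x => inr (exist _ (inv G (val x)) (keepok_inv (valP x)))
  end.

Definition alab (f : aE) : label B :=
  match f with
  | inl (inl (inl x)) => lab G (val x)
  | inl (inl (inr _)) => b
  | inl (inr _) => flip b
  | inr x => lab G (val x)
  end.

Lemma ainvK : involutive ainv.
Proof.
case=> [[[x|x]|x]|x] //=.
  by congr (inl (inl (inl _))); apply: val_inj; rewrite /= invK.
by congr (inr _); apply: val_inj; rewrite /= invK.
Qed.

Lemma ainv_neq f : ainv f != f.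
Proof.
case: f => [[[x|x]|x]|x] //=; apply/eqP => -[] /(congr1 val) /= /eqP;
  by rewrite (negbTE (inv_neq _)).
Qed.

Lemma alab_inv f : alab (ainv f) = flip (alab f).
Proof. by case: f => [[[x|x]|x]|x] //=; rewrite ?lab_inv ?flipK. Qed.

Definition alpha_graph : graph B := @Graph B aV aE asrc ainv alab ainvK ainv_neq alab_inv.

End Alpha.

Arguments midok {B} G b e.
Arguments preok {B} G b A e.
Arguments Mid {B} G b A e h.

From Pilot Require Import Defs.
From Stdlib Require Import Relations.
From HB Require Import structures.
From mathcomp Require Import all_boot.
From mathcomp Require Import zify.
Set Implicit Arguments. Unset Strict Implicit. Unset Printing Implicit Defensive.

(* Folding never identifies two vertices that a label-preserving map to a
   deterministic automaton separates.  Reading [alpha Sigma] in the automaton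
   whose states are the vertices of [Sigma] together with a formal vertex [v b]
   for each vertex [v] without outgoing [b]-edge, the state at the start of [e']
   and the label of [e'] determine [e]; this gives injectivity.
   For the core statement, apply [alpha] to an immersed loop of [Sigma] through
   [e]: between two consecutive edges not labeled [b^{+-1}] the image is a word
   in [b^{+-1}], which we reduce freely.  The resulting loop is immersed in
   [tight (alpha Sigma)]: inside a reduced word by reduction, at its ends since
   the neighbouring labels are not [b^{+-1}], and when a word reduces to nothing,
   its [b]- and [b^-1]-counts agree, which in a tight immersed loop forces the
   two neighbours to be consecutive, hence not inverse.  Surjectivity holds as
   the [e'] are the only edges of [alpha Sigma] not labeled [b^{+-1}]. *)

Section Merge.
Variables (T : Type) (R : relation T).

Lemma merge_equivalence a b : equivalence T R -> equivalence T (Defs.merge R a b).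
Proof.
case=> r t s; split.
- by move=> x; left.
- move=> x y z [h|[[h1 h2]|[h1 h2]]] [k|[[k1 k2]|[k1 k2]]];
  rewrite /Defs.merge; eauto 6.
- move=> x y [h|[[h1 h2]|[h1 h2]]]; first by left; auto.
    by right; right; split; auto.
  by right; left; split; auto.
Qed.

Lemma merge_kernel (U : Type) (Q : relation U) (F : T -> U) a b :
  equivalence U Q -> (forall x y, R x y -> Q (F x) (F y)) -> Q (F a) (F b) ->
  forall x y, Defs.merge R a b x y -> Q (F x) (F y).
Proof.
case=> _ t s hR hab x y [h|[[h1 h2]|[h1 h2]]]; first exact: hR.
  exact: t (hR _ _ h1) (t _ _ _ hab (hR _ _ h2)).
exact: t (hR _ _ h1) (t _ _ _ (s _ _ hab) (hR _ _ h2)).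
Qed.

End Merge.

Lemma equivalence_eq (U : Type) : equivalence U eq.
Proof. exact: inverse_image_of_eq id. Qed.

Section Folding.
Variables (B : finType) (H : graph B).

Definition fold_reachable (S : fstate H) : Prop :=
  clos_refl_trans _ (@fold_step B H) (init_state H) S.

Lemma fold_reachable_ind (P : fstate H -> Prop) :
  P (init_state H) ->
  (forall S e1 e2, P S -> VR S (src H e1) (src H e2) -> lab H e1 = lab H e2 ->
     P (fold_at S e1 e2)) ->
  forall S, fold_reachable S -> P S.
Proof.
move=> P0 Pfold S reachS.
suff: forall S1 S2, clos_refl_trans _ (@fold_step B H) S1 S2 -> P S1 -> P S2.
  by apply; [exact: reachS|].
move=> S1 S2; elim=> [_ _ [S' e1 e2 hv hl _] PS'|//|]; first exact: Pfold.
by move=> ? ? ? _ IH1 _ IH2 /IH1.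
Qed.

Record is_quotient (S : fstate H) : Prop := IsQuotient {
  VR_equiv : equivalence _ (VR S);
  ER_equiv : equivalence _ (ER S);
  ER_src : forall f g, ER S f g -> VR S (src H f) (src H g);
  ER_inv : forall f g, ER S f g -> ER S (Defs.inv H f) (Defs.inv H g);
  ER_lab : forall f g, ER S f g -> lab H f = lab H g }.

Lemma is_quotient_fold S e1 e2 : is_quotient S ->
  VR S (src H e1) (src H e2) -> lab H e1 = lab H e2 -> is_quotient (fold_at S e1 e2).
Proof.
case=> qV qE Esrc Einv Elab hv hl.
have Vrefl u : VR S u u := Relation_Definitions.equiv_refl _ _ qV u.
have Erefl f : ER S f f := Relation_Definitions.equiv_refl _ _ qE f.
have qV' := merge_equivalence (tgt H e1) (tgt H e2) qV.
have qE1 := merge_equivalence e1 e2 qE.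
have qE' := merge_equivalence (Defs.inv H e1) (Defs.inv H e2) qE1.
split=> //=.
- apply: merge_kernel => //; last by right; left.
  apply: merge_kernel => //; last by left.
  by move=> x y /Esrc; left.
- apply: merge_kernel => //; last by rewrite !Defs.invK; left; right; left.
  apply: merge_kernel => //; last by right; left; split; left.
  by move=> x y /Einv; left; left.
- apply: merge_kernel; [exact: equivalence_eq| |by rewrite !lab_inv hl].
  by apply: merge_kernel; [exact: equivalence_eq|exact: Elab|].
Qed.

Lemma fold_reachable_quotient S : fold_reachable S -> is_quotient S.
Proof.
apply: fold_reachable_ind => [|S' e1 e2]; last exact: is_quotient_fold.
by split=> [||f g ->|f g ->|f g ->] //; exact: equivalence_eq.
Qed.

Lemma fold_reachable_VR_state (T : Type) (state : V H -> T)
    (delta : T -> label B -> T) :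
  (forall f, state (tgt H f) = delta (state (src H f)) (lab H f)) ->
  forall S, fold_reachable S -> forall u v, VR S u v -> state u = state v.
Proof.
move=> hdelta; apply: fold_reachable_ind => [u v -> //|S e1 e2 IH hv hl].
apply: merge_kernel; [exact: equivalence_eq|exact: IH|].
by rewrite !hdelta hl (IH _ _ hv).
Qed.

End Folding.

Section FreeReduction.
Variables (B : finType) (H : graph B).

Definition lab_count (l : label B) (p : seq (E H)) : nat :=
  count (fun f => lab H f == l) p.

Definition noncancelling : rel (E H) := fun f g => lab H g != flip (lab H f).

Definition push_reduce (f : E H) (q : seq (E H)) : seq (E H) :=
  if q is g :: q' then (if lab H g == flip (lab H f) then q' else f :: q)
  else [:: f].

Definition reduce (p : seq (E H)) : seq (E H) := foldr push_reduce [::] p.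

Lemma reduce_sorted p : sorted noncancelling (reduce p).
Proof.
elim: p => //= f p; case: (reduce p) => [|g q] //= hs.
by case: ifP => [_|/negbT h] /=; [exact: path_sorted hs|rewrite /noncancelling h].
Qed.

Lemma mem_reduce x p : x \in reduce p -> x \in p.
Proof.
elim: p => //= f p IH; rewrite inE.
case: (reduce p) IH => [|g q] /= IH; first by rewrite inE => ->.
case: ifP => _ hx; first by rewrite IH ?orbT // inE hx orbT.
by move: hx; rewrite !inE => /orP[->|/IH ->]; rewrite ?orbT.
Qed.

(* Cancellation removes one [l] and one [flip l] at a time. *)
Lemma lab_count_reduce l p :
  lab_count l (reduce p) + lab_count (flip l) p =
  lab_count l p + lab_count (flip l) (reduce p).
Proof.
elim: p => //= f p; rewrite /lab_count /=.
case: (reduce p) => [|g q] /=; first lia.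
case: ifP => /= [/eqP hl|_]; last lia.
rewrite hl (inv_eq (@flipK B)) (inv_eq (@flipK B)) flipK; lia.
Qed.

End FreeReduction.

Section Chain.
Variables (T : Type) (r : T -> T -> Prop).

Fixpoint chain (x : T) (p : seq T) : Prop :=
  if p is y :: p' then r x y /\ chain y p' else True.

Lemma chain_cat x p q : chain x p -> chain (last x p) q -> chain x (p ++ q).
Proof. by elim: p x => //= y p IH x [h1 h2] h3; split=> //; apply: IH. Qed.

Lemma chain_nth x0 x p : chain x p ->
  forall i, i < size p -> r (nth x0 (x :: p) i) (nth x0 p i).
Proof. by elim: p x => //= y p IH x [h1 h2] [|i] //= /IH; apply. Qed.

End Chain.

Section QuotientPaths.
Variables (B : finType) (H : graph B) (S : fstate H).
Hypotheses (qS : is_quotient S) (tS : is_tight_state S).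

Let VR_refl u : VR S u u.
Proof. exact: (Relation_Definitions.equiv_refl _ _ (VR_equiv qS)). Qed.
Let VR_sym u v : VR S u v -> VR S v u.
Proof. exact: (Relation_Definitions.equiv_sym _ _ (VR_equiv qS)). Qed.
Let VR_trans u v w : VR S u v -> VR S v w -> VR S u w.
Proof. exact: (Relation_Definitions.equiv_trans _ _ (VR_equiv qS)). Qed.

Fixpoint qpath (u : V H) (p : seq (E H)) (v : V H) : Prop :=
  if p is f :: p' then VR S u (src H f) /\ qpath (tgt H f) p' v else VR S u v.

Lemma qpath_VRl u u' p v : VR S u u' -> qpath u' p v -> qpath u p v.
Proof.
case: p => [|f p] /=; first exact: VR_trans.
by move=> h [h1 h2]; split=> //; apply: VR_trans h h1.
Qed.

Lemma qpath_cat u p w q v : qpath u p w -> qpath w q v -> qpath u (p ++ q) v.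
Proof.
elim: p u => [|f p IH] u /=; first by move=> h; apply: qpath_VRl.
by move=> [h1 h2] h3; split=> //; apply: IH h2 h3.
Qed.

Lemma qpath_reduce u p v : qpath u p v -> qpath u (reduce p) v.
Proof.
elim: p u => [|f p IH] u //= [h1 /IH].
case: (reduce p) => [|g q] /=; first by split.
case: ifP => [/eqP hl [h2 h3]|_]; last by split.
have hgf : ER S g (Defs.inv H f) by apply: tS; rewrite ?lab_inv; [apply: VR_sym|].
have := ER_src qS (ER_inv qS hgf); rewrite Defs.invK -/(tgt H g) => h4.
by apply: qpath_VRl h3; apply: VR_trans h1 (VR_sym h4).
Qed.

Definition qadj (f g : E H) : Prop :=
  VR S (tgt H f) (src H g) /\ ~ ER S g (Defs.inv H f).

Lemma qpath_chain r m m' : qpath (tgt H m) r (src H m') ->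
  path (@noncancelling B H) m (r ++ [:: m']) -> chain qadj m (r ++ [:: m']).
Proof.
elim: r m => [|f r IH] m /= => [h|[h1 h2]] /andP[hl hp].
  by do !split=> //; move/(ER_lab qS); rewrite lab_inv => e; rewrite /noncancelling e eqxx in hl.
split; last exact: IH.
by split=> // /(ER_lab qS); rewrite lab_inv => e; rewrite /noncancelling e eqxx in hl.
Qed.

Lemma chain_imm_loop x p : chain qadj x (p ++ [:: x]) ->
  imm_loop S (size (x :: p)) (nth x (x :: p)).
Proof.
move=> hp; split=> // i hi.
have hi' : i < size (p ++ [:: x]) by rewrite size_cat addn1.
have := chain_nth x hp hi'.
rewrite -cat_cons nth_cat hi nth_cat /=.
case: ltnP => hip; first by rewrite modn_small.
have -> : i = size p by move: hi => /=; lia.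
by rewrite subnn modnn.
Qed.

End QuotientPaths.

Lemma flip_neq (B : finType) (c : label B) : (flip c == c) = false.
Proof. by case: c => x s; rewrite /flip /= xpair_eqE eqxx /=; case: s. Qed.

Lemma isb_neq_flip (B : finType) (b l l' : label B) :
  isb b l -> ~~ isb b l' -> (l' == flip l) = false.
Proof. by move=> hl hl'; apply/eqP => e; move: hl'; rewrite e isb_flip hl. Qed.

Lemma nisb_neq_flip (B : finType) (b l l' : label B) :
  ~~ isb b l -> isb b l' -> (l' == flip l) = false.
Proof. by move=> hl hl'; apply/eqP => e; move: hl'; rewrite e isb_flip (negbTE hl). Qed.

Section Automaton.
Variables (B : finType) (G : graph B) (b : label B) (A : {set label B}).
Hypothesis tG : is_tight G.
Local Notation H := (alpha_graph G b A).

Definition out_edge (u : V G) (l : label B) : option (E G) :=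
  [pick k | (src G k == u) && (lab G k == l)].

Lemma out_edgeE u l k : src G k = u -> lab G k = l -> out_edge u l = Some k.
Proof.
move=> hk hl; rewrite /out_edge; case: pickP => [k' /andP[/eqP hk' /eqP hl']|/(_ k)].
  by congr Some; apply: tG; rewrite ?hk ?hk' ?hl ?hl'.
by rewrite hk hl !eqxx.
Qed.

(* States: [(v, false)] is the vertex [v] of [G]; [(v, true)] is a new vertex,
   reached from [v] by reading [b] when [v] has no outgoing [b]-edge. *)
Definition read_b (v : V G) : V G * bool :=
  if out_edge v b is Some k then (tgt G k, false) else (v, true).

Definition unread_b (P : V G * bool) : V G :=
  if P.2 then P.1 else if out_edge P.1 (flip b) is Some k then tgt G k else P.1.

Lemma read_bK v : unread_b (read_b v) = v.
Proof.
rewrite /read_b {1}/out_edge; case: pickP => [k /andP[/eqP hk /eqP hl]|_] //=.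
by rewrite /unread_b /= (@out_edgeE _ _ (Defs.inv G k)) /tgt ?Defs.invK ?lab_inv ?hk ?hl.
Qed.

Definition state (x : V H) : V G * bool :=
  match x with
  | inl v => (v, false)
  | inr y => read_b (src G (val y))
  end.

(* Recovers the source of [e] from the state at the start of the subedge of
   [alpha e] labeled [c]. *)
Definition mid_src (P : V G * bool) (c : label B) : V G :=
  if c \in A then unread_b P else P.1.

Definition delta (P : V G * bool) (l : label B) : V G * bool :=
  if l == b then read_b P.1
  else if l == flip b then (unread_b P, false)
  else if out_edge (mid_src P l) l is Some x then state (newv b A (Defs.inv G x))
  else P.

Lemma state_newv e : state (newv b A e) =
  if preok G b A e then read_b (src G e) else (src G e, false).
Proof.
by rewrite /newv; case: insubP => [y -> /= ->|/negbTE ->].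
Qed.

Lemma out_edge_Mid x : midok G b x ->
  out_edge (mid_src (state (newv b A x)) (lab G x)) (lab G x) = Some x.
Proof.
move=> hx; rewrite state_newv /preok hx /= /mid_src.
by case: (lab G x \in A); rewrite ?read_bK; apply: out_edgeE.
Qed.

Lemma state_tgt (f : E H) : state (tgt H f) = delta (state (src H f)) (lab H f).
Proof.
case: f => [[[x|x]|x]|x] /=.
- have := valP x; rewrite /midok /isb negb_or => /andP[/negbTE hb /negbTE hb'].
  by rewrite /delta hb hb' out_edge_Mid // (valP x).
- by rewrite state_newv (valP x) /delta eqxx.
- rewrite /delta flip_neq eqxx /= state_newv.
  by case: x => y hy /=; rewrite hy read_bK.
- have := valP x; rewrite /keepok /isb /delta => /orP[] /eqP hl;
    rewrite hl ?flip_neq eqxx /=.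
    by rewrite /read_b (@out_edgeE _ _ (val x)).
  by rewrite /unread_b /= (@out_edgeE _ _ (val x)).
Qed.

Lemma Mid_ER_inj (S : fstate H) : fold_reachable S ->
  forall (e1 e2 : E G) (h1 : midok G b e1) (h2 : midok G b e2),
  ER S (Mid G b A e1 h1) (Mid G b A e2 h2) -> e1 = e2.
Proof.
move=> reachS e1 e2 h1 h2 he.
have hl := ER_lab (fold_reachable_quotient reachS) he.
have hv := fold_reachable_VR_state state_tgt reachS (ER_src (fold_reachable_quotient reachS) he).
by move: (out_edge_Mid h1); rewrite /= in hl hv; rewrite hv hl out_edge_Mid // => -[].
Qed.

End Automaton.

Lemma Mid_eq (B : finType) (G : graph B) (b : label B) (A : {set label B})
    (e1 e2 : E G) (h1 : midok G b e1) (h2 : midok G b e2) :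
  e1 = e2 -> Mid G b A e1 h1 = Mid G b A e2 h2.
Proof. by move=> e12; congr (inl (inl (inl _))); apply: val_inj. Qed.

Lemma inv_Mid (B : finType) (G : graph B) (b : label B) (A : {set label B})
    (e : E G) (he : midok G b e) :
  Defs.inv (alpha_graph G b A) (Mid G b A e he) = Mid G b A (Defs.inv G e) (midok_inv he).
Proof. by congr (inl (inl (inl _))); apply: val_inj. Qed.

Section ImageLoop.
Variables (B : finType) (G : graph B) (b : label B) (A : {set label B}).
Hypothesis tG : is_tight G.
Local Notation H := (alpha_graph G b A).
Variable S : fstate H.
Hypotheses (qS : is_quotient S) (tS : is_tight_state S).

Let VR_refl u : VR S u u.
Proof. exact: (Relation_Definitions.equiv_refl _ _ (VR_equiv qS)). Qed.

(* The path [alpha e] is [alpha_pre e ++ alpha_mid e ++ alpha_keep e ++ alpha_post e],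
   where exactly one of [alpha_mid e] and [alpha_keep e] is nonempty. *)
Definition alpha_mid (e : E G) : seq (E H) :=
  if insub e is Some x then [:: (inl (inl (inl x)) : aE G b A)] else [::].
Definition alpha_pre (e : E G) : seq (E H) :=
  if insub e is Some x then [:: (inl (inl (inr x)) : aE G b A)] else [::].
Definition alpha_post (e : E G) : seq (E H) :=
  if insub (Defs.inv G e) is Some x then [:: (inl (inr x) : aE G b A)] else [::].
Definition alpha_keep (e : E G) : seq (E H) :=
  if insub e is Some x then [:: (inr x : aE G b A)] else [::].

Lemma alpha_midE e (he : midok G b e) : alpha_mid e = [:: Mid G b A e he].
Proof.
rewrite /alpha_mid; case: insubP => [y _ ey|]; last by rewrite he.
by congr [:: inl (inl (inl _))]; apply: val_inj.
Qed.

Lemma alpha_keepE e (he : keepok b e) :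
  alpha_keep e = [:: (inr (exist _ e he) : aE G b A)].
Proof.
rewrite /alpha_keep; case: insubP => [y _ ey|]; last by rewrite he.
by congr [:: inr _]; apply: val_inj.
Qed.

Lemma newv_nopre e : ~~ preok G b A e -> newv b A e = inl (src G e).
Proof. by move=> he; rewrite /newv insubN. Qed.

Lemma qpath_alpha_pre e : qpath S (inl (src G e)) (alpha_pre e) (newv b A e).
Proof.
rewrite /alpha_pre; case: insubP => [y _ ey|he] /=; first by rewrite ey.
by rewrite newv_nopre.
Qed.

Lemma qpath_alpha_post e :
  qpath S (newv b A (Defs.inv G e)) (alpha_post e) (inl (tgt G e)).
Proof.
rewrite /alpha_post; case: insubP => [y _ ey|he] /=; first by rewrite ey.
by rewrite newv_nopre.
Qed.

Lemma lab_count_alpha_pre e :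
  lab_count b (alpha_pre e) = preok G b A e /\ lab_count (flip b) (alpha_pre e) = 0.
Proof.
rewrite /alpha_pre /lab_count; case: insubP => [y -> _|/negbTE ->] //=.
by rewrite eqxx eq_sym flip_neq.
Qed.

Lemma lab_count_alpha_post e : lab_count b (alpha_post e) = 0 /\
  lab_count (flip b) (alpha_post e) = preok G b A (Defs.inv G e).
Proof.
rewrite /alpha_post /lab_count; case: insubP => [y -> _|/negbTE ->] //=.
by rewrite eqxx flip_neq.
Qed.

Lemma isb_alpha_pre e : all (fun f => isb b (lab H f)) (alpha_pre e).
Proof. by rewrite /alpha_pre; case: insubP => //= *; rewrite /isb eqxx. Qed.

Lemma isb_alpha_post e : all (fun f => isb b (lab H f)) (alpha_post e).
Proof. by rewrite /alpha_post; case: insubP => //= *; rewrite /isb eqxx orbT. Qed.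

Lemma isb_alpha_keep e : all (fun f => isb b (lab H f)) (alpha_keep e).
Proof. by rewrite /alpha_keep; case: insubP => //= -[y hy] *; rewrite andbT. Qed.

Variables (n : nat) (h : nat -> E G).
Hypotheses (n_gt0 : 0 < n)
  (h_imm : forall t, tgt G (h t) = src G (h t.+1) /\ h t.+1 != Defs.inv G (h t))
  (h_period : h n = h 0) (h0_mid : midok G b (h 0)).

Lemma lab_h_nflip t : lab G (h t.+1) != flip (lab G (h t)).
Proof.
apply/eqP => e; have [h1 /eqP h2] := h_imm t; apply: h2.
by apply: tG; [rewrite -h1|rewrite lab_inv].
Qed.

Lemma keepok_lab_succ t : keepok b (h t) -> keepok b (h t.+1) ->
  lab G (h t.+1) = lab G (h t).
Proof.
move: (lab_h_nflip t); rewrite /keepok /isb.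
move=> hl /orP[/eqP e1|/eqP e1] /orP[/eqP e2|/eqP e2]; rewrite e1 e2 //;
  by move: hl; rewrite e1 e2 ?flipK eqxx.
Qed.

Definition alpha_keeps (s m : nat) : seq (E H) :=
  flatten [seq alpha_keep (h t) | t <- iota s m].

(* The word in [b^{+-1}] read by [alpha] between the edges [h p] and [h q]. *)
Definition bsegment (p q : nat) : seq (E H) :=
  alpha_post (h p) ++ alpha_keeps p.+1 (q - p.+1) ++ alpha_pre (h q).

Lemma qpath_alpha_keeps s m : (forall i, i < m -> keepok b (h (s + i))) ->
  qpath S (inl (src G (h s))) (alpha_keeps s m) (inl (src G (h (s + m)))).
Proof.
elim: m s => [|m IH] s hk; first by rewrite addn0 /=.
have hk0 : keepok b (h s) by have := hk 0 isT; rewrite addn0.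
rewrite /alpha_keeps /= alpha_keepE /=; split=> //.
rewrite -/(tgt G (h s)) (h_imm s).1 -addSnnS; apply: IH => i hi.
by rewrite addSnnS; apply: hk.
Qed.

Lemma lab_count_alpha_keeps l s m L :
  (forall i, i < m -> keepok b (h (s + i)) /\ lab G (h (s + i)) = L) ->
  lab_count l (alpha_keeps s m) = m * (L == l).
Proof.
elim: m s => [|m IH] s hk //.
have [hk0 hl0] : keepok b (h s) /\ lab G (h s) = L by have := hk 0 isT; rewrite addn0.
have IH' : lab_count l (alpha_keeps s.+1 m) = m * (L == l).
  by apply: IH => i hi; rewrite addSnnS; apply: hk.
move: IH'; rewrite /alpha_keeps /lab_count /= alpha_keepE /= hl0 => ->.
by rewrite mulSn.
Qed.

Definition no_mid_between (p q : nat) : Prop :=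
  forall t, p < t < q -> ~~ midok G b (h t).

Lemma keepok_between p q : no_mid_between p q ->
  forall i, i < q - p.+1 -> keepok b (h (p.+1 + i)).
Proof.
by move=> hpq i hi; rewrite /keepok -[isb _ _]negbK; apply: hpq; apply/andP; split; lia.
Qed.

Lemma qpath_bsegment p q (hp : midok G b (h p)) (hq : midok G b (h q)) :
  p < q -> no_mid_between p q ->
  qpath S (tgt H (Mid G b A (h p) hp)) (bsegment p q) (src H (Mid G b A (h q) hq)).
Proof.
move=> ltpq hpq; rewrite /bsegment /=.
apply: (qpath_cat qS (qpath_alpha_post _)); rewrite (h_imm p).1.
apply: (qpath_cat qS); last exact: qpath_alpha_pre.
have -> : q = p.+1 + (q - p.+1) by rewrite subnKC.
by rewrite addKn; apply/qpath_alpha_keeps/keepok_between.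
Qed.

Lemma isb_bsegment p q : all (fun f => isb b (lab H f)) (bsegment p q).
Proof.
rewrite /bsegment !all_cat isb_alpha_pre isb_alpha_post andbT /= /alpha_keeps.
by elim: (iota _ _) => //= t l IH; rewrite all_cat isb_alpha_keep IH.
Qed.

Lemma lab_between p q : no_mid_between p q ->
  forall i, i < q - p.+1 -> keepok b (h (p.+1 + i)) /\ lab G (h (p.+1 + i)) = lab G (h p.+1).
Proof.
move=> hpq; elim=> [|i IH] hi; first by split; [exact: keepok_between hi|rewrite addn0].
have [k1 l1] := IH (ltnW hi); split; first exact: keepok_between hi.
by rewrite addnS keepok_lab_succ // -addnS; exact: keepok_between hi.
Qed.

(* If the [b]-word between two consecutive edges not labeled [b^{+-1}] cancels
   out, its [b]- and [b^-1]-counts agree; as all the kept letters between them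
   are equal, there are none, and then the two edges are consecutive in [h]. *)
Lemma reduce_bsegment_nil p q (hp : midok G b (h p)) (hq : midok G b (h q)) :
  p < q -> no_mid_between p q -> reduce (bsegment p q) = [::] ->
  lab G (h q) != flip (lab G (h p)).
Proof.
move=> ltpq hpq hr.
have := lab_count_reduce b (bsegment p q); rewrite hr => hc.
have [->|ltp1q] := eqVneq q p.+1; first exact: lab_h_nflip.
have m_gt0 : 0 < q - p.+1 by lia.
have hL := lab_between hpq.
move: hc; rewrite /bsegment /lab_count !count_cat -!/(lab_count _ _).
rewrite (lab_count_alpha_keeps b hL) (lab_count_alpha_keeps (flip b) hL).
have [-> ->] := lab_count_alpha_post (h p); have [-> ->] := lab_count_alpha_pre (h q).
have hLb : isb b (lab G (h p.+1)) by have [k0 _] := hL 0 m_gt0; rewrite addn0 in k0.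
move=> hc; apply/negP => /eqP e.
have ep : preok G b A (h q) = preok G b A (Defs.inv G (h p)).
  by rewrite /preok hq midok_inv //= lab_inv e.
move: hc; rewrite ep; case/orP: hLb => /eqP ->;
  rewrite ?eqxx ?flip_neq ?(eq_sym b) ?flip_neq /lab_count /= ?muln0 ?muln1; lia.
Qed.

Lemma chain_block p q (hp : midok G b (h p)) (hq : midok G b (h q)) :
  p < q -> no_mid_between p q ->
  chain (qadj S) (Mid G b A (h p) hp)
    (reduce (bsegment p q) ++ [:: Mid G b A (h q) hq]).
Proof.
move=> ltpq hpq; apply: (qpath_chain qS).
  exact: (qpath_reduce qS tS (qpath_bsegment hp hq ltpq hpq)).
have hisb f : f \in reduce (bsegment p q) -> isb b (lab H f).
  by move/mem_reduce; apply: (allP (isb_bsegment p q)).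
rewrite cat_path; case E0: (reduce (bsegment p q)) hisb => [|f r] hisb /=.
  by rewrite /noncancelling andbT; apply: reduce_bsegment_nil.
have hs := reduce_sorted (bsegment p q); rewrite E0 /= in hs.
have hf : isb b (lab H f) by apply: hisb; rewrite mem_head.
have hl : isb b (lab H (last f r)) by apply: hisb; rewrite mem_last.
by rewrite hs /noncancelling (nisb_neq_flip (b:=b)) // (isb_neq_flip (b:=b)).
Qed.

Lemma midok_h_n : midok G b (h n).
Proof. by rewrite h_period. Qed.

Lemma next_mid_exists p : exists q, ((p < q) && midok G b (h q)) || (q == n).
Proof. by exists n; rewrite eqxx orbT. Qed.

Definition next_mid (p : nat) : nat := ex_minn (next_mid_exists p).

Lemma next_midP p : p < n -> [/\ p < next_mid p, next_mid p <= n,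
  midok G b (h (next_mid p)) & no_mid_between p (next_mid p)].
Proof.
move=> ltpn; rewrite /next_mid; case: ex_minnP => m Pm minm.
have lemn : m <= n by apply: minm; rewrite eqxx orbT.
have [ltpm hm] : p < m /\ midok G b (h m).
  by case/orP: Pm => [/andP[]//|/eqP ->]; split=> //; apply: midok_h_n.
split=> // t /andP[h1 h2]; apply/negP => ht.
by have := minm t; rewrite h1 ht /= => /(_ isT); lia.
Qed.

(* The reduced image of [h] from position [p] on; [k] is fuel. *)
Fixpoint image_loop (k p : nat) : seq (E H) :=
  if k is k'.+1 then
    if p < n then alpha_mid (h p) ++ reduce (bsegment p (next_mid p)) ++
                  image_loop k' (next_mid p)
    else [::]
  else [::].

Lemma image_loop_chain k p (hp : midok G b (h p)) : n - p <= k -> p < n ->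
  exists T, image_loop k p = Mid G b A (h p) hp :: T /\
    chain (qadj S) (Mid G b A (h p) hp) (T ++ [:: Mid G b A (h n) midok_h_n]).
Proof.
elim: k p hp => [|k IH] p hp hk ltpn; first lia.
have [h1 h2 h3 h4] := next_midP ltpn.
rewrite /= ltpn (alpha_midE hp) /=.
exists (reduce (bsegment p (next_mid p)) ++ image_loop k (next_mid p)); split=> //.
have [ltqn|eqqn] : next_mid p < n \/ next_mid p = n by lia.
  have [T [-> cT]] := IH _ h3 ltac:(lia) ltqn.
  rewrite -catA cat_cons -cat1s catA; apply: chain_cat; first exact: chain_block.
  by rewrite last_cat.
have -> : image_loop k (next_mid p) = [::] by case: k {IH hk} => //= k; rewrite eqqn ltnn.
rewrite cats0; move: h3 (chain_block hp h3 h1 h4); rewrite eqqn => h3.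
by rewrite (bool_irrelevance h3 midok_h_n).
Qed.

Lemma image_loop_imm : exists T, imm_loop S (size (Mid G b A (h 0) h0_mid :: T))
  (nth (Mid G b A (h 0) h0_mid) (Mid G b A (h 0) h0_mid :: T)).
Proof.
have [T [_ cT]] := image_loop_chain h0_mid (leq_subr 0 n) n_gt0.
by rewrite (Mid_eq _ _ _ h_period) in cT; exists T; exact: chain_imm_loop cT.
Qed.

End ImageLoop.

Lemma Mid_in_core (B : finType) (G : graph B) (b : label B) (A : {set label B})
    (tG : is_tight G) (cG : is_core G) (S : fstate (alpha_graph G b A))
    (hS : folds_to S) (e : E G) (he : midok G b e) :
  in_core S (Mid G b A e he).
Proof.
have [qS tS] := (fold_reachable_quotient hS.1, hS.2).
have [n [g [[n_gt0 g_imm] [i lt_in g_e]]]] := cG.1 e.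
pose h t := g ((i + t) %% n).
have h_imm t : tgt G (h t) = src G (h t.+1) /\ h t.+1 != Defs.inv G (h t).
  have [h1 h2] := g_imm _ (ltn_pmod (i + t) n_gt0).
  have et : ((i + t) %% n).+1 %% n = (i + t.+1) %% n.
    by rewrite -addn1 modnDml -addnA addn1.
  by rewrite et in h1 h2; split=> //; apply/eqP.
have h_period : h n = h 0 by rewrite /h modnDr addn0.
have h0_e : h 0 = e \/ h 0 = Defs.inv G e by rewrite /h addn0 modn_small.
have h0_mid : midok G b (h 0) by case: h0_e => ->; rewrite ?midok_inv.
have [T hT] := image_loop_imm tG qS tS n_gt0 h_imm h_period h0_mid.
set x := Mid G b A (h 0) h0_mid in hT.
exists (size (x :: T)), (nth x (x :: T)); split=> //; exists 0 => //.
have ER_refl f : ER S f f := Relation_Definitions.equiv_refl _ _ (ER_equiv qS) f.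
case: h0_e => h0e; [left|right; rewrite inv_Mid] => /=.
  by rewrite /x (Mid_eq A h0_mid he h0e).
by rewrite /x (Mid_eq A h0_mid (midok_inv he) h0e).
Qed.

Lemma nisb_Mid (B : finType) (G : graph B) (b : label B) (A : {set label B})
    (f : E (alpha_graph G b A)) :
  ~~ isb b (lab (alpha_graph G b A) f) ->
  exists (e : E G) (he : midok G b e), f = Mid G b A e he.
Proof.
case: f => [[[[e he]|x]|x]|[e he]] /=; first by exists e, he.
- by rewrite /isb eqxx.
- by rewrite /isb eqxx orbT.
- by move/negP.
Qed.

Theorem lemma9p8 (B : finType) (G : graph B) (b : label B) (A : {set label B})
    (hbA : b \notin A) (hbA' : flip b \notin A)
    (hT : is_tight G) (hC : is_core G)
    (S : fstate (alpha_graph G b A)) (hS : folds_to S) :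
  (forall (e : E G) (he : midok G b e), in_core S (Mid G b A e he)) /\
  (forall (e1 e2 : E G) (h1 : midok G b e1) (h2 : midok G b e2),
      ER S (Mid G b A e1 h1) (Mid G b A e2 h2) -> e1 = e2) /\
  (forall f : E (alpha_graph G b A),
      in_core S f -> ~~ isb b (lab (alpha_graph G b A) f) ->
      exists (e : E G) (he : midok G b e), ER S f (Mid G b A e he)).
Proof.
split; [|split].
- exact: Mid_in_core.
- exact: Mid_ER_inj hT _ hS.1.
- move=> f _ /nisb_Mid [e [he ->]]; exists e, he.
  exact: (Relation_Definitions.equiv_refl _ _ (ER_equiv (fold_reachable_quotient hS.1)) _).
Qed.
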